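(* Every formula $\varphi$ in first normal form is equivalent to a formula $\varphi'$ in second normal form such that $|\varphi'| \leq 3^{\mathrm{gfba}(\varphi)}\cdot|\varphi|$. Moreover, for every $b>0$, if $|\psi|\leq b$ for every limit subformula $\psi$ of $\varphi$, then $|\psi'|\leq b$ for every limit subformula $\psi'$ of $\varphi'$.
   Context: Fix a finite set $Ap$ of atomic propositions. A word is an infinite sequence $w = w[0]w[1]\dots$ of letters of $2^{Ap}$, and $w_i$ denotes the suffix $w[i]w[i+1]\dots$. Formulas are generated by $\varphi ::= \mathbf{true} \mid \mathbf{false} \mid a \mid \neg a \mid \varphi\wedge\varphi \mid \varphi\vee\varphi \mid \mathbf{X}\varphi \mid \varphi\,\mathbf{U}\,\varphi \mid \varphi\,\mathbf{W}\,\varphi \mid \mathbf{GF}\varphi \mid \mathbf{FG}\varphi$ ($a\in Ap$), where $\mathbf{GF}$, $\mathbf{FG}$ are single unary operators (limit operators). Semantics: $w\models a$ iff $a\in w[0]$, $w\models\neg a$ iff $a\notin w[0]$, Boolean constants and connectives as usual; $w\models\mathbf{X}\varphi$ iff $w_1\models\varphi$; $w\models\varphi\mathbf{U}\psi$ iff $\exists k$: $w_k\models\psi$ and $\forall j<k$: $w_j\models\varphi$; $w\models\varphi\mathbf{W}\psi$ iff ($\forall k$: $w_k\models\varphi$) or $w\models\varphi\mathbf{U}\psi$; $w\models\mathbf{GF}\varphi$ iff $w_k\models\varphi$ for infinitely many $k$; $w\models\mathbf{FG}\varphi$ iff $\exists n\,\forall k\geq n$: $w_k\models\varphi$. Two formulas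 are equivalent if satisfied by the same words. The syntax tree $T_\varphi$ has leaves $\mathbf{true},\mathbf{false},a,\neg a$ and one internal node per operator occurrence; $|\varphi|$ is its number of nodes. Formulas with top operator $\mathbf{U},\mathbf{W},\mathbf{X},\mathbf{GF},\mathbf{FG}$ are temporal formulas; those with top operator $\mathbf{GF}$ or $\mathbf{FG}$ are limit formulas, and the corresponding nodes are limit nodes. A node is under another if it is a proper descendant of it. $\mathrm{ubw}(\varphi)$ is the number of $\mathbf{U}$-nodes of $T_\varphi$ that are under some $\mathbf{W}$-node but not under any limit node. $\mathrm{gfba}(\varphi)$ is the number of distinct limit formulas $\psi'$ such that $\psi'$ is a proper subformula of some temporal subformula (proper or not) of $\varphi$. A formula is in first normal form if $\mathrm{ubw}(\varphi)=0$, and in second normal form if $\mathrm{ubw}(\varphi)=0$ and $\mathrm{gfba}(\varphi)=0$. *)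

From Stdlib Require Import List.
From mathcomp Require Import all_boot.
Set Implicit Arguments. Unset Strict Implicit. Unset Printing Implicit Defensive.

Section LTL.
Variable A : finType.

Definition word := nat -> {set A}.
Definition suffix (w : word) (i : nat) : word := fun n => w (i + n).

Inductive form : Type :=
| Tt | Ff | Atom (a : A) | NAtom (a : A)
| And (f g : form) | Or (f g : form)
| Next (f : form) | Until (f g : form) | WUntil (f g : form)
| GF (f : form) | FG (f : form).

Fixpoint sat (w : word) (f : form) : Prop :=
  match f with
  | Tt => True
  | Ff => False
  | Atom a => a \in w 0
  | NAtom a => a \notin w 0
  | And f g => sat w f /\ sat w g
  | Or f g => sat w f \/ sat w g
  | Next f => sat (suffix w 1) f
  | Until f g => exists k, sat (suffix w k) g /\ forall j, j < k -> sat (suffix w j) f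
  | WUntil f g => (forall k, sat (suffix w k) f) \/
                  exists k, sat (suffix w k) g /\ forall j, j < k -> sat (suffix w j) f
  | GF f => forall n, exists k, n <= k /\ sat (suffix w k) f
  | FG f => exists n, forall k, n <= k -> sat (suffix w k) f
  end.

Definition fequiv (f g : form) : Prop := forall w, sat w f <-> sat w g.

Fixpoint fsize (f : form) : nat :=
  match f with
  | Tt | Ff | Atom _ | NAtom _ => 1
  | And f g | Or f g | Until f g | WUntil f g => (fsize f + fsize g).+1
  | Next f | GF f | FG f => (fsize f).+1
  end.

Definition is_temporal (f : form) : bool :=
  match f with Next _ | Until _ _ | WUntil _ _ | GF _ | FG _ => true | _ => false end.

Definition is_limit (f : form) : bool :=
  match f with GF _ | FG _ => true | _ => false end.

Fixpoint subs (f : form) : list form :=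
  f :: match f with
       | Tt | Ff | Atom _ | NAtom _ => nil
       | And g h | Or g h | Until g h | WUntil g h => subs g ++ subs h
       | Next g | GF g | FG g => subs g
       end.

Definition psubs (f : form) : list form := tl (subs f).

(* number of U-nodes under some W-node but not under any limit node;
   underW records whether we are below a W-node (and not below a limit node) *)
Fixpoint ubw_aux (underW : bool) (f : form) : nat :=
  match f with
  | Tt | Ff | Atom _ | NAtom _ => 0
  | GF _ | FG _ => 0
  | And g h | Or g h => ubw_aux underW g + ubw_aux underW h
  | Next g => ubw_aux underW g
  | Until g h => underW + ubw_aux underW g + ubw_aux underW h
  | WUntil g h => ubw_aux true g + ubw_aux true h
  end.

Definition ubw (f : form) : nat := ubw_aux false f.

Lemma form_eq_dec : forall f g : form, {f = g} + {f <> g}.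
Proof. decide equality; exact: eq_comparable. Defined.

Definition gfba_list (f : form) : list form :=
  flat_map (fun t => if is_temporal t then filter is_limit (psubs t) else nil) (subs f).

Definition gfba (f : form) : nat := length (nodup form_eq_dec (gfba_list f)).

Definition first_nf (f : form) : Prop := ubw f = 0.
Definition second_nf (f : form) : Prop := ubw f = 0 /\ gfba f = 0.

End LTL.

(* A limit formula p (GF q or FG q) holds on a word iff it holds on every suffix of it, so
   inside phi it behaves like a constant: phi is equivalent to its Shannon expansion
   (p /\ phi[tt/p]) \/ phi[ff/p], where phi[ff/p] implies phi because the syntax is
   negation-free.  Substituting constants creates no U-node under a W-node and no new limit
   subformula, and the expansion at most triples the size.  If p is of maximal size among the
   limit formulas counted by gfba, no other counted formula contains p, so the expansion
   removes p from the count without adding anything; iterating gfba phi times concludes. *)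

From Stdlib Require Import List Setoid Classical FunctionalExtensionality.
From mathcomp Require Import all_boot zify.

Set Implicit Arguments.
Unset Strict Implicit.
Unset Printing Implicit Defensive.

Arguments form_eq_dec : simpl never.

Lemma length_nodup_lt T (dec : forall x y : T, {x = y} + {x <> y}) (l l' : list T) p :
  In p l' -> (forall x, In x l -> In x l' /\ x <> p) ->
  length (nodup dec l) < length (nodup dec l').
Proof.
move=> pl' sub; apply/leP; apply: (@NoDup_incl_length _ (p :: nodup dec l)).
- by constructor; [move/nodup_In/sub => [_] | exact: NoDup_nodup].
- by move=> x /= [<- | /nodup_In/sub [xl' _]]; apply/nodup_In.
Qed.

Lemma exists_argmax T (m : T -> nat) (a : T) (l : list T) :
  exists2 x, In x (a :: l) & forall y, In y (a :: l) -> m y <= m x.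
Proof.
elim: l a => [|b l IH] a; first by exists a => [|y [<- | []]]; [left |].
have [x xbl xmax] := IH b.
case: (leqP (m a) (m x)) => [le_ax | lt_xa].
- by exists x => [|y [<- | /xmax]]; [right |..].
- by exists a => [|y [<- // | /xmax]]; [left | lia].
Qed.

Section Formulas.
Variable A : finType.
Implicit Types (w : word A) (c f g p t x y z phi : form A).

Lemma suffixD w i j : suffix (suffix w i) j = suffix w (i + j).
Proof. by apply: functional_extensionality => n; rewrite /suffix addnA. Qed.

Lemma sat_limit_suffix f w k : is_limit f -> sat (suffix w k) f <-> sat w f.
Proof.
case: f => // f _ /=; split.
- move=> inf n; have [m [lenm]] := inf n; rewrite suffixD => fm.
  by exists (k + m); split=> //; lia.
- move=> inf n; have [m [lenm fm]] := inf (k + n).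
  by exists (m - k); split; [lia | rewrite suffixD subnKC //; lia].
- move=> [n ev]; exists (k + n) => m lenm.
  by rewrite -(@subnKC k m) -?suffixD; [apply: ev | ]; lia.
- by move=> [n ev]; exists n => m lenm; rewrite suffixD; apply: ev; lia.
Qed.

Fixpoint fsubst p c f : form A :=
  if form_eq_dec f p then c else
  match f with
  | And g h => And (fsubst p c g) (fsubst p c h)
  | Or g h => Or (fsubst p c g) (fsubst p c h)
  | Next g => Next (fsubst p c g)
  | Until g h => Until (fsubst p c g) (fsubst p c h)
  | WUntil g h => WUntil (fsubst p c g) (fsubst p c h)
  | GF g => GF (fsubst p c g)
  | FG g => FG (fsubst p c g)
  | _ => f
  end.

Lemma sat_fsubst (Q : word A -> Prop) p c :
  (forall w k, Q w -> Q (suffix w k)) -> (forall w, Q w -> sat w c <-> sat w p) ->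
  forall f w, Q w -> sat w (fsubst p c f) <-> sat w f.
Proof.
move=> Qsuffix Qcp; elim=> [||a|a|f IHf g IHg|f IHf g IHg|f IHf|f IHf g IHg|f IHf g IHg|f IHf|f IHf]
  w Qw /=; case: form_eq_dec => /= [e|_]; try by subst p; apply: Qcp.
all: try by rewrite IHf // IHg.
all: try (have {}IHf k := IHf _ (Qsuffix w k Qw)); try (have {}IHg k := IHg _ (Qsuffix w k Qw)).
all: by try setoid_rewrite IHf; try setoid_rewrite IHg.
Qed.

Lemma sat_fsubst_mono p c :
  (forall w, sat w c -> sat w p) -> forall f w, sat w (fsubst p c f) -> sat w f.
Proof.
move=> cp; elim=> [||a|a|f IHf g IHg|f IHf g IHg|f IHf|f IHf g IHg|f IHf g IHg|f IHf|f IHf]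
  w /=; case: form_eq_dec => /= [e|_]; try by subst p; apply: cp.
all: firstorder.
Qed.

Lemma fsize_gt0 f : 0 < fsize f.
Proof. by case: f. Qed.

Lemma subs_cons f : subs f = f :: psubs f.
Proof. by case: f. Qed.

Lemma subs_refl f : In f (subs f).
Proof. by rewrite subs_cons; left. Qed.

Lemma psubs_subs x f : In x (psubs f) -> In x (subs f).
Proof. by rewrite subs_cons; right. Qed.

Lemma subs_trans x y f : In x (subs y) -> In y (subs f) -> In x (subs f).
Proof.
move=> xy; elim: f => [||a|a|f IHf g IHg|f IHf g IHg|f IHf|f IHf g IHg|f IHf g IHg|f IHf|f IHf]
  /= [e | yf]; try by subst y; exact: xy.
all: right; rewrite ?in_app_iff in yf *; intuition.
Qed.

Lemma fsize_subs x f : In x (subs f) -> fsize x <= fsize f.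
Proof.
elim: f => [||a|a|f IHf g IHg|f IHf g IHg|f IHf|f IHf g IHg|f IHf g IHg|f IHf|f IHf]
  /= [<- // | xf]; try case/in_app_iff: xf => xf; try have := IHf xf; try have := IHg xf; lia.
Qed.

Lemma fsize_psubs x f : In x (psubs f) -> fsize x < fsize f.
Proof.
case: f => [||a|a|f g|f g|f|f g|f g|f|f] //= xf;
  try case/in_app_iff: xf => xf; have := fsize_subs xf; lia.
Qed.

Lemma fsubst_id p c f : ~ In p (subs f) -> fsubst p c f = f.
Proof.
elim: f => [||a|a|f IHf g IHg|f IHf g IHg|f IHf|f IHf g IHg|f IHf g IHg|f IHf|f IHf]
  /= pf; case: form_eq_dec => /= [e|_]; try by case: pf; left.
all: rewrite ?in_app_iff in pf; f_equal; solve [apply: IHf; tauto | apply: IHg; tauto].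
Qed.

Lemma fsize_fsubst p c f : fsize c <= fsize p -> fsize (fsubst p c f) <= fsize f.
Proof.
move=> cp; elim: f => [||a|a|f IHf g IHg|f IHf g IHg|f IHf|f IHf g IHg|f IHf g IHg|f IHf|f IHf]
  /=; case: form_eq_dec => /= [e|_]; try by subst p.
all: lia.
Qed.

Lemma fsize_fsubst_lt p c f :
  fsize c < fsize p -> In p (subs f) -> fsize (fsubst p c f) < fsize f.
Proof.
move=> cp; have le_cp := ltnW cp.
elim: f => [||a|a|f IHf g IHg|f IHf g IHg|f IHf|f IHf g IHg|f IHf g IHg|f IHf|f IHf]
  /= pf; case: form_eq_dec => /= [e|ne]; try by subst p.
all: case: pf => [// | pf]; try case/in_app_iff: pf => pf.
all: try have := IHf pf; try have := IHg pf.
all: try have := fsize_fsubst f le_cp; try have := fsize_fsubst g le_cp; lia.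
Qed.

Lemma subs_fsubst p c f x : In x (subs (fsubst p c f)) ->
  In x (subs c) \/ exists2 y, In y (subs f) & x = fsubst p c y.
Proof.
elim: f => [||a|a|f IHf g IHg|f IHf g IHg|f IHf|f IHf g IHg|f IHf g IHg|f IHf|f IHf];
  rewrite subs_cons => -[<-|]; try by right; eexists; [exact: subs_refl |].
all: rewrite /=; case: form_eq_dec => /= [_ /psubs_subs|_]; try by left.
all: first [case/in_app_iff => [/IHf | /IHg] | move/IHf | by []].
all: move=> [xc | [y yf ->]]; [by left | right; exists y => //].
all: by right; rewrite ?in_app_iff; tauto.
Qed.

Lemma gfba_listP x f : In x (gfba_list f) <->
  exists t, [/\ In t (subs f), is_temporal t, In x (psubs t) & is_limit x].
Proof.
rewrite /gfba_list in_flat_map; split.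
- move=> [t [tf]]; case: ifP => // temp_t /filter_In [xt lim_x].
  by exists t.
- move=> [t [tf temp_t xt lim_x]]; exists t; split=> //.
  by rewrite temp_t; apply/filter_In.
Qed.

Lemma gfba_list_trans x g f : In g (subs f) -> In x (gfba_list g) -> In x (gfba_list f).
Proof.
move=> gf /gfba_listP [t [tg temp_t xt lim_x]]; apply/gfba_listP.
by exists t; split=> //; apply: subs_trans gf.
Qed.

Lemma gfba_list_subs x f : In x (gfba_list f) -> In x (subs f).
Proof. by move/gfba_listP=> [t [tf _ /psubs_subs xt _]]; apply: subs_trans tf. Qed.

Lemma fsize_gfba_list x f : In x (gfba_list f) -> fsize x < fsize f.
Proof.
move/gfba_listP=> [t [/fsize_subs tf _ /fsize_psubs xt _]]; exact: leq_trans tf.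
Qed.

Definition limits_bounded b f :=
  forall psi, In psi (subs f) -> is_limit psi -> fsize psi <= b.

Section LeafSubstitution.
Variables (p c : form A).
Hypothesis leaf_c : fsize c = 1.

Lemma leaf_props : [/\ subs c = [:: c], is_temporal c = false, is_limit c = false
  & forall u, ubw_aux u c = 0].
Proof.
case: c leaf_c => //= [f g|f g|f|f g|f g|f|f]; have := fsize_gt0 f; lia.
Qed.

Lemma temporal_fsubst f : is_temporal (fsubst p c f) -> f <> p /\ is_temporal f.
Proof.
have [_ temp_c _ _] := leaf_props.
by case: f => [||a|a|g h|g h|g|g h|g h|g|g] /=; case: form_eq_dec => /= ? ; rewrite ?temp_c.
Qed.

Lemma limit_fsubst f : is_limit (fsubst p c f) -> f <> p /\ is_limit f.
Proof.
have [_ _ lim_c _] := leaf_props.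
by case: f => [||a|a|g h|g h|g|g h|g h|g|g] /=; case: form_eq_dec => /= ? ; rewrite ?lim_c.
Qed.

Lemma ubw_aux_fsubst u f : ubw_aux u (fsubst p c f) <= ubw_aux u f.
Proof.
have [_ _ _ ubw_c] := leaf_props.
elim: f u => [||a|a|f IHf g IHg|f IHf g IHg|f IHf|f IHf g IHg|f IHf g IHg|f IHf|f IHf]
  u /=; case: form_eq_dec => /= _; rewrite ?ubw_c //.
all: try have := IHf u; try have := IHg u; try have := IHf true; try have := IHg true; lia.
Qed.

Lemma gfba_list_fsubst f x :
  (forall z, In z (gfba_list f) -> z <> p -> ~ In p (subs z)) ->
  In x (gfba_list (fsubst p c f)) -> In x (gfba_list f) /\ x <> p.
Proof.
have [subs_c temp_c lim_c _] := leaf_props.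
move=> p_notin /gfba_listP [t []]; case/subs_fsubst => [| [y yf ->]].
  by rewrite subs_c => -[<- | []]; rewrite temp_c.
move=> /temporal_fsubst [y_p temp_y] xt; case/psubs_subs/subs_fsubst: (xt) => [| [z zy def_x]].
  by rewrite subs_c => -[<- | []]; rewrite lim_c.
subst x => /limit_fsubst [z_p lim_z].
have zy' : In z (psubs y).
  move: zy; rewrite subs_cons => -[e | //]; subst z.
  by have := fsize_psubs xt; rewrite ltnn.
have zf : In z (gfba_list f) by apply/gfba_listP; exists y.
by rewrite fsubst_id //; exact: p_notin.
Qed.

Lemma limits_bounded_fsubst b f : limits_bounded b f -> limits_bounded b (fsubst p c f).
Proof.
have [subs_c _ lim_c _] := leaf_props.
move=> bf x /subs_fsubst [| [y yf ->]].
  by rewrite subs_c => -[<- | []]; rewrite lim_c.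
move=> /limit_fsubst [_ lim_y]; apply: leq_trans (bf y yf lim_y).
by apply: fsize_fsubst; rewrite leaf_c fsize_gt0.
Qed.

End LeafSubstitution.

Definition shannon p phi : form A := Or (And p (fsubst p (Tt A) phi)) (fsubst p (Ff A) phi).

Lemma shannon_equiv p phi : is_limit p -> fequiv (shannon p phi) phi.
Proof.
move=> lim_p w /=.
have ff_phi := @sat_fsubst_mono p (Ff A) (fun _ => False_ind _) phi w.
have [pw | npw] := classic (sat w p).
- rewrite (@sat_fsubst (fun w => sat w p) p (Tt A)) //; first tauto.
  by move=> w' k; rewrite sat_limit_suffix.
- rewrite (@sat_fsubst (fun w => ~ sat w p) p (Ff A)) //; first tauto.
  by move=> w' k; rewrite sat_limit_suffix.
Qed.

Lemma ubw_shannon p phi : is_limit p -> ubw (shannon p phi) <= ubw phi + ubw phi.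
Proof.
by case: p => // g _; rewrite /ubw /= add0n; apply: leq_add; exact: ubw_aux_fsubst.
Qed.

Lemma fsize_shannon p phi :
  In p (subs phi) -> 1 < fsize p -> fsize (shannon p phi) <= 3 * fsize phi.
Proof.
move=> p_phi p_gt1 /=; have := fsize_subs p_phi.
have := @fsize_fsubst_lt p (Tt A) phi p_gt1 p_phi.
have := @fsize_fsubst_lt p (Ff A) phi p_gt1 p_phi.
lia.
Qed.

Lemma limits_bounded_shannon b p phi :
  In p (subs phi) -> limits_bounded b phi -> limits_bounded b (shannon p phi).
Proof.
move=> p_phi bphi x /=; rewrite !in_app_iff => -[<- // | [<- // | [[xp | xtt] | xff]]].
- by apply: bphi; exact: subs_trans p_phi.
- by apply: (limits_bounded_fsubst _ bphi xtt).
- by apply: (limits_bounded_fsubst _ bphi xff).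
Qed.

Lemma gfba_list_shannon p phi : gfba_list (shannon p phi) =
  gfba_list p ++ gfba_list (fsubst p (Tt A) phi) ++ gfba_list (fsubst p (Ff A) phi).
Proof. by rewrite /gfba_list /= !flat_map_app catA. Qed.

Lemma gfba_shannon p phi : In p (gfba_list phi) ->
  (forall y, In y (gfba_list phi) -> fsize y <= fsize p) -> gfba (shannon p phi) < gfba phi.
Proof.
move=> p_in p_max; apply: (length_nodup_lt _ p_in) => x.
have p_notin z : In z (gfba_list phi) -> z <> p -> ~ In p (subs z).
  by move=> /p_max z_le z_p; rewrite subs_cons => -[/z_p [] | /fsize_psubs]; lia.
rewrite gfba_list_shannon !in_app_iff => -[x_p | [x_tt | x_ff]].
- split; first exact: gfba_list_trans (gfba_list_subs p_in) x_p.
  by move=> e; have := fsize_gfba_list x_p; rewrite e ltnn.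
- by apply: (gfba_list_fsubst _ p_notin x_tt).
- by apply: (gfba_list_fsubst _ p_notin x_ff).
Qed.

Lemma exists_second_nf phi : ubw phi = 0 ->
  exists2 phi', fequiv phi' phi & [/\ second_nf phi', fsize phi' <= 3 ^ gfba phi * fsize phi
    & forall b, limits_bounded b phi -> limits_bounded b phi'].
Proof.
have [n] := ubnP (gfba phi); elim: n phi => // n IH phi lt_gn ubw0.
have [gfba0 | gfba_pos] := posnP (gfba phi).
  by exists phi => //; rewrite gfba0 expn0 mul1n.
have [p p_in p_max] : exists2 p, In p (gfba_list phi) &
    forall y, In y (gfba_list phi) -> fsize y <= fsize p.
  by move: gfba_pos; rewrite /gfba; case: (gfba_list phi) => [|a l] // _; apply: exists_argmax.
have lim_p : is_limit p by case/gfba_listP: p_in => t [].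
have p_phi := gfba_list_subs p_in.
have gfba_lt := gfba_shannon p_in p_max.
have ubw0' : ubw (shannon p phi) = 0 by have := ubw_shannon phi lim_p; lia.
have [|phi' eqv' [nf' size' bnd']] := IH (shannon p phi) _ ubw0'; first lia.
exists phi'; first by move=> w; rewrite eqv'; apply: shannon_equiv.
split=> // [|b /(limits_bounded_shannon p_phi)/bnd' //].
apply: leq_trans size' _; rewrite -(prednK gfba_pos) expnSr -mulnA leq_mul //.
- by rewrite leq_pexp2l // -ltnS prednK.
- apply: fsize_shannon => //.
  by case: (p) lim_p => //= f _; rewrite ltnS fsize_gt0.
Qed.

End Formulas.

Theorem proposition2 (A : finType) (phi : form A) :
  first_nf phi ->
  exists phi' : form A,
    fequiv phi' phi /\ second_nf phi' /\
    fsize phi' <= 3 ^ gfba phi * fsize phi /\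
    (forall b : nat, 0 < b ->
       (forall psi, In psi (subs phi) -> is_limit psi -> fsize psi <= b) ->
       forall psi', In psi' (subs phi') -> is_limit psi' -> fsize psi' <= b).
Proof.
move=> /exists_second_nf [phi' eqv [nf' size' bnd']].
by exists phi'; do 3!split=> //; move=> b _; exact: bnd'.
Qed.
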